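(* For $m,n\in\mathbb N$ define groups by generators and relations $G_{m,n}=\langle s,t\mid s^2,\ t^m,\ (st^{-1}st)^n\rangle$ and $H_{m,n}=\langle s_1,\dots,s_m,T\mid s_i^2,\ T^m,\ (s_is_{i+1})^n,\ T^{-1}s_iTs_{i+1}\ (1\le i\le m)\rangle$, with the convention $s_{m+1}=s_1$. Then there is a group isomorphism $\varphi:G_{m,n}\to H_{m,n}$ with $\varphi(s)=s_m$ and $\varphi(t)=T$. Moreover, $G_{m,n}$ is finite if and only if $m=1$ or $m=2$ or $n=1$ or $(m,n)=(3,2)$.
   Context: $\mathbb N=\{1,2,3,\dots\}$. A relator $r$ in a presentation means the relation $r=1$. *)

From mathcomp Require Import all_boot.
From Stdlib Require List.
Set Implicit Arguments.
Unset Strict Implicit.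
Unset Printing Implicit Defensive.

(* Finitely presented groups, encoded via words in generators and their
   inverses modulo the congruence generated by free cancellation and the
   relators.  A letter (a, false) is the generator a, (a, true) is a^-1. *)

Definition word (A : Type) := seq (A * bool).

Definition inv_letter (A : Type) (x : A * bool) : A * bool := (x.1, ~~ x.2).

Definition winv (A : Type) (w : word A) : word A := rev (map (@inv_letter A) w).

(* The congruence on words defining the group < A | R >:
   its equivalence classes (with concatenation) form the presented group. *)
Inductive weq (A : Type) (R : word A -> Prop) : word A -> word A -> Prop :=
  | weq_refl w : weq R w w
  | weq_sym u v : weq R u v -> weq R v u
  | weq_trans u v w : weq R u v -> weq R v w -> weq R u w
  | weq_cancel u x v : weq R (u ++ x :: inv_letter x :: v) (u ++ v)
  | weq_rel u r v : R r -> weq R (u ++ r ++ v) (u ++ v).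

Definition pres_finite (A : Type) (R : word A -> Prop) : Prop :=
  exists l : seq (word A), forall w, exists2 u, List.In u l & weq R w u.

(* a group isomorphism < A | R > -> < B | S >, given on representatives *)
Definition pres_iso (A B : Type) (R : word A -> Prop) (S : word B -> Prop)
  (phi : word A -> word B) : Prop :=
  [/\ (forall u v, weq R u v -> weq S (phi u) (phi v)),
      (forall u v, weq S (phi (u ++ v)) (phi u ++ phi v)),
      (forall u v, weq S (phi u) (phi v) -> weq R u v)
    & (forall w, exists u, weq S (phi u) w)].

Inductive Ggen := gs | gt.

Definition Grel (m n : nat) (r : word Ggen) : Prop :=
  r = [:: (gs, false); (gs, false)] \/
  r = nseq m (gt, false) \/
  r = flatten (nseq n [:: (gs, false); (gt, true); (gs, false); (gt, false)]).

(* generators: Some i (i : 'I_m) stands for s_{i+1}; None stands for T *)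
Definition Hgen (m : nat) := option 'I_m.

Definition nextIdx (m : nat) (hm : 0 < m) (i : 'I_m) : 'I_m :=
  Ordinal (ltn_pmod i.+1 hm).

Lemma lastIdx_proof (m : nat) (hm : 0 < m) : m.-1 < m.
Proof. by rewrite ltn_predL. Qed.

Definition lastIdx (m : nat) (hm : 0 < m) : 'I_m := Ordinal (lastIdx_proof hm).

Definition Hrel (m n : nat) (hm : 0 < m) (r : word (Hgen m)) : Prop :=
  r = nseq m (None, false) \/
  exists i : 'I_m,
    r = [:: (Some i, false); (Some i, false)] \/
    r = flatten (nseq n [:: (Some i, false); (Some (nextIdx hm i), false)]) \/
    r = [:: (None, true); (Some i, false); (None, false); (Some (nextIdx hm i), false)].

From mathcomp Require Import all_boot all_algebra ring.
From Stdlib Require Import Setoid Morphisms.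

Set Implicit Arguments.
Unset Strict Implicit.
Unset Printing Implicit Defensive.

Import GRing.Theory.

(* The isomorphism sends s to s_m and t to T; its inverse sends T to t and s_i to
   t^-i s t^i, which is legitimate because T^-1 s_i T = s_{i+1} makes every s_i a
   conjugate of s_m by a power of T.  The inverse maps (s_i s_{i+1})^n to a conjugate
   of (s t^-1 s t)^n, and s t^-1 s t itself goes to s_m T^-1 s_m T = s_m s_1.

   G is finite in the listed cases: for m = 1 it has at most two elements; for n = 1
   the relator says t^-1 s t = s; for m = 2 the group is dihedral of order at most 4n;
   for (m, n) = (3, 2) the s_i are three commuting involutions permuted cyclically by
   T, so |H| <= 24.

   Otherwise G acts on Z/m x Z/n x Z: t shifts the first coordinate, and s acts on the
   fibre over j by the reflection x |-> k_j - x of Z/n, twisted on the last coordinate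
   by the coboundary of a function g_j : Z/n -> Z.  The block s t^-1 s t translates
   the fibre by k_j - k_{j+1}, so its n-th power acts trivially once the drift it
   accumulates along a translation orbit cancels.  For suitable k and g some word
   maps (0, 0, z) to (0, 0, z + 1) for every z, so its powers are pairwise distinct
   in G. *)

(** * Words modulo relators *)

Lemma InP (X : eqType) (x : X) (s : seq X) : reflect (List.In x s) (x \in s).
Proof.
elim: s => [|y s IH] /=; first exact: ReflectF.
rewrite inE; apply: (iffP orP) => [[/eqP ->|/IH]|[->|/IH]]; by [left | right].
Qed.

#[export] Hint Resolve weq_refl : core.

Section Presentation.
Variables (A : Type) (R : word A -> Prop).
Implicit Types (u v w r : word A) (x : A * bool).

Global Instance weq_Equivalence : Equivalence (weq R).
Proof. split; [exact: weq_refl | exact: weq_sym | exact: weq_trans]. Qed.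

Lemma weq_catl w u v : weq R u v -> weq R (w ++ u) (w ++ v).
Proof.
elim=> {u v} [u|u v _ IH|u v u' _ IH1 _ IH2|u x v|u r v Rr].
- by [].
- by symmetry.
- by rewrite IH1.
- by rewrite !catA; apply: weq_cancel.
- by rewrite !catA -(catA _ r); apply: weq_rel.
Qed.

Lemma weq_catr w u v : weq R u v -> weq R (u ++ w) (v ++ w).
Proof.
elim=> {u v} [u|u v _ IH|u v u' _ IH1 _ IH2|u x v|u r v Rr].
- by [].
- by symmetry.
- by rewrite IH1.
- by rewrite -!catA /=; apply: weq_cancel.
- by rewrite -!catA; apply: weq_rel.
Qed.

Global Instance cat_weq_Proper : Proper (weq R ==> weq R ==> weq R) (@cat _).
Proof. by move=> u u' Hu v v' Hv; rewrite (weq_catr v Hu); apply: weq_catl. Qed.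

Global Instance cons_weq_Proper x : Proper (weq R ==> weq R) (cons x).
Proof. by move=> u v; apply: (weq_catl [:: x]). Qed.

Lemma inv_letterK : involutive (@inv_letter A).
Proof. by case=> a b; rewrite /inv_letter /= negbK. Qed.

Lemma weq_cancel_head x r : weq R (x :: inv_letter x :: r) r.
Proof. exact: (weq_cancel R [::]). Qed.

Lemma weq_cancel_head' x r : weq R (inv_letter x :: x :: r) r.
Proof. by rewrite -{2}(inv_letterK x); apply: weq_cancel_head. Qed.

Lemma weq_relator r v : R r -> weq R (r ++ v) v.
Proof. exact: weq_rel R [::] r v. Qed.

Lemma weq_nseq_cancel k x r : weq R (nseq k x ++ nseq k (inv_letter x) ++ r) r.
Proof.
elim: k r => [|k IH] r //.
by rewrite -{1}addn1 nseqD -catA /= weq_cancel_head.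
Qed.

Lemma weq_nseq_cancel' k x r : weq R (nseq k (inv_letter x) ++ nseq k x ++ r) r.
Proof. by rewrite -{2}(inv_letterK x); apply: weq_nseq_cancel. Qed.

Lemma weq_inv_of_power a k r : R (nseq k (a, false)) -> 0 < k ->
  weq R ((a, true) :: r) (nseq k.-1 (a, false) ++ r).
Proof.
case: k => // k Rak _.
by rewrite -{1}(weq_relator r Rak); apply: (weq_cancel_head' (a, false)).
Qed.

Lemma weq_flatten_nseq X Y : (forall v, weq R (X ++ v) (Y ++ v)) ->
  forall k v, weq R (flatten (nseq k X) ++ v) (flatten (nseq k Y) ++ v).
Proof.
move=> XY; elim=> [|k IH] v /=; first by [].
by rewrite -!catA IH XY.
Qed.

Lemma weq_flatten_nseq_conj X Y P Q :
  (forall v, weq R (X ++ v) (P ++ Y ++ Q ++ v)) ->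
  (forall v, weq R (P ++ Q ++ v) v) -> (forall v, weq R (Q ++ P ++ v) v) ->
  forall k v, weq R (flatten (nseq k X) ++ v) (P ++ flatten (nseq k Y) ++ Q ++ v).
Proof.
move=> XY PQ QP; elim=> [|k IH] v /=; first by rewrite PQ.
by rewrite -!catA IH XY QP.
Qed.

Lemma weq_commute_involutions (x y : word A) :
  (forall r, weq R (x ++ x ++ r) r) -> (forall r, weq R (y ++ y ++ r) r) ->
  (forall r, weq R (x ++ y ++ x ++ y ++ r) r) ->
  forall r, weq R (y ++ x ++ r) (x ++ y ++ r).
Proof. by move=> xx yy xyxy r; rewrite -{1}(xyxy (y ++ x ++ r)) (yy (x ++ r)) xx. Qed.

Lemma weq_move_past x y y' : (forall r, weq R (x :: y :: r) (y' :: x :: r)) ->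
  forall (e : bool) r, weq R (x :: nseq e y ++ r) (nseq e y' ++ x :: r).
Proof. by move=> xy [] r /=; [apply: xy |]. Qed.

Lemma weq_cons_nseq_mod x m k : (forall r, weq R (nseq m x ++ r) r) -> k < m ->
  exists l : 'I_m, weq R (x :: nseq k x) (nseq l x).
Proof.
move=> xm lt_km; case: (ltngtP k.+1 m) => [lt_k1m | | k1m].
- by exists (Ordinal lt_k1m).
- by rewrite ltnNge lt_km.
- exists (Ordinal (leq_ltn_trans (leq0n k) lt_km)).
  by rewrite -[x :: _]/(nseq k.+1 x) k1m -[nseq m x]cats0 xm.
Qed.

Lemma nf_cons_nseq (I : Type) (nf : I -> word A) x :
  (forall i, exists j, weq R (x :: nf i) (nf j)) ->
  forall k i, exists j, weq R (nseq k x ++ nf i) (nf j).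
Proof.
move=> nf_x; elim=> [|k IH] i /=; first by exists i.
have [j Hj] := IH i; have [j' Hj'] := nf_x j; exists j'; by rewrite Hj.
Qed.

Lemma pres_finite_of_nf (I : finType) (nf : I -> word A) (i0 : I) :
  weq R [::] (nf i0) -> (forall x i, exists j, weq R (x :: nf i) (nf j)) ->
  pres_finite R.
Proof.
move=> nf0 nf_cons.
have nfP w : exists i, weq R w (nf i).
  elim: w => [|x w [i Hi]]; first by exists i0.
  have [j Hj] := nf_cons x i; exists j; by rewrite Hi.
exists (map nf (enum I)) => w; have [i Hi] := nfP w.
by exists (nf i) => //; apply/List.in_map/InP; rewrite mem_enum.
Qed.

Lemma not_pres_finite_of_invariant (F : word A -> int) :
  (forall u v, weq R u v -> F u = F v) -> (forall k : nat, exists w, F w = k) ->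
  ~ pres_finite R.
Proof.
move=> F_weq F_onto [l Hl].
pose ks := [seq Posz k | k <- iota 0 (size l).+1].
have sub : {subset ks <= map F l}.
  move=> _ /mapP[k _ ->]; have [w <-] := F_onto k; have [u Hu Hwu] := Hl w.
  rewrite (F_weq _ _ Hwu); exact/InP/List.in_map.
have ks_uniq : uniq ks by rewrite map_inj_uniq ?iota_uniq // => ? ? [].
by have := uniq_leq_size ks_uniq sub; rewrite !size_map size_iota ltnn.
Qed.

End Presentation.

Lemma pres_finite_iso (A B : Type) (R : word A -> Prop) (S : word B -> Prop)
    (phi : word A -> word B) :
  pres_iso R S phi -> pres_finite S -> pres_finite R.
Proof.
case=> _ _ phi_inj phi_onto [l Hl].
have [l' Hl'] : exists l' : seq (word A),
    forall u, List.In u l -> exists2 u', List.In u' l' & weq S (phi u') u.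
  elim: l {Hl} => [|u l [l' Hl']]; first by exists [::].
  have [u' Hu'] := phi_onto u; exists (u' :: l') => v /= [<-|/Hl' [v' Hv' ?]].
  + by exists u'; [left|].
  + by exists v'; [right|].
exists l' => w; have [u Hu wu] := Hl (phi w); have [u' Hu' u'u] := Hl' u Hu.
by exists u' => //; apply: phi_inj; rewrite wu -u'u.
Qed.

(** * The isomorphism *)

Notation sG := (gs, false).
Notation tG := (gt, false).
Notation tGi := (gt, true).

Definition sst : word Ggen := [:: sG; tGi; sG; tG].

Definition sconj (k : nat) (b : bool) : word Ggen := nseq k tGi ++ (gs, b) :: nseq k tG.

Lemma nseqSr (T : Type) k (x : T) : nseq k.+1 x = nseq k x ++ [:: x].
Proof. by rewrite -addn1 nseqD. Qed.

Lemma cat_nseq_cons (T : Type) k (x : T) s : nseq k x ++ x :: s = x :: nseq k x ++ s.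
Proof. by elim: k => //= k ->. Qed.

Section GRelations.
Variables m n : nat.
Local Notation GR := (Grel m n).

Lemma Grel_ss : GR [:: sG; sG]. Proof. by left. Qed.
Lemma Grel_tm : GR (nseq m tG). Proof. by right; left. Qed.
Lemma Grel_sst : GR (flatten (nseq n sst)). Proof. by right; right. Qed.

Lemma G_s_inv b r : weq GR ((gs, b) :: r) (sG :: r).
Proof. by case: b => //; apply: (@weq_inv_of_power _ _ gs 2 r Grel_ss). Qed.

Lemma G_ss b b' r : weq GR ((gs, b) :: (gs, b') :: r) r.
Proof. by rewrite G_s_inv G_s_inv; apply: (weq_relator r Grel_ss). Qed.

Lemma G_tm r : weq GR (nseq m tG ++ r) r.
Proof. exact: weq_relator Grel_tm. Qed.

Lemma G_tk_cancel k r : weq GR (nseq k tG ++ nseq k tGi ++ r) r.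
Proof. exact: (weq_nseq_cancel GR k tG). Qed.

Lemma G_tik_cancel k r : weq GR (nseq k tGi ++ nseq k tG ++ r) r.
Proof. exact: (weq_nseq_cancel' GR k tG). Qed.

Lemma G_tim r : weq GR (nseq m tGi ++ r) r.
Proof. by rewrite -{1}(G_tm r) G_tik_cancel. Qed.

Lemma sconj_cancel k b b' r : weq GR (sconj k b ++ sconj k b' ++ r) r.
Proof. by rewrite /sconj -!catA /= G_tk_cancel G_ss G_tik_cancel. Qed.

Lemma G_nf_cons (I : finType) (nf : I -> word Ggen) : 0 < m ->
  (forall i, exists j, weq GR (sG :: nf i) (nf j)) ->
  (forall i, exists j, weq GR (tG :: nf i) (nf j)) ->
  forall x i, exists j, weq GR (x :: nf i) (nf j).
Proof.
move=> m_gt0 nf_s nf_t [[] [|]] i //.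
- by have [j Hj] := nf_s i; exists j; rewrite G_s_inv.
- have [j Hj] := nf_cons_nseq nf_t m.-1 i.
  by exists j; rewrite (weq_inv_of_power _ Grel_tm m_gt0).
Qed.

End GRelations.

Section HRelations.
Variables (m n : nat) (hm : 0 < m).
Local Notation HR := (Hrel n hm).
Local Notation nx := (nextIdx hm).
Local Notation sm := (Some (lastIdx hm)).

Lemma Hrel_tm : HR (nseq m (None, false)). Proof. by left. Qed.
Lemma Hrel_ss i : HR [:: (Some i, false); (Some i, false)].
Proof. by right; exists i; left. Qed.
Lemma Hrel_pow i : HR (flatten (nseq n [:: (Some i, false); (Some (nx i), false)])).
Proof. by right; exists i; right; left. Qed.
Lemma Hrel_conj i : HR [:: (None, true); (Some i, false); (None, false); (Some (nx i), false)].
Proof. by right; exists i; right; right. Qed.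

Lemma H_s_inv i b r : weq HR ((Some i, b) :: r) ((Some i, false) :: r).
Proof. by case: b => //; apply: (@weq_inv_of_power _ _ (Some i) 2 r (Hrel_ss i)). Qed.

Lemma H_conj i r :
  weq HR ((None, true) :: (Some i, false) :: (None, false) :: r) ((Some (nx i), false) :: r).
Proof.
rewrite -{1}(weq_relator r (Hrel_ss (nx i))).
exact: (weq_relator ((Some (nx i), false) :: r) (Hrel_conj i)).
Qed.

Lemma H_t_s i r :
  weq HR ((None, false) :: (Some (nx i), false) :: r) ((Some i, false) :: (None, false) :: r).
Proof. by rewrite -(H_conj i r) (weq_cancel_head _ (None, false)). Qed.

Lemma nextIdx_last : nx (lastIdx hm) = Ordinal hm.
Proof. by apply: val_inj; rewrite /= prednK // modnn. Qed.

Lemma nextIdx_small (i : 'I_m) (lt_im : i.+1 < m) : nx i = Ordinal lt_im.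
Proof. by apply: val_inj; rewrite /= modn_small. Qed.

Lemma lastIdxS : (lastIdx hm).+1 = m.
Proof. by rewrite /= prednK. Qed.

Lemma idx_small_or_last (i : 'I_m) : i.+1 < m \/ i = lastIdx hm.
Proof.
case: (ltngtP i.+1 m) => [|| im]; [by left | by rewrite ltnNge ltn_ord | right].
by apply: val_inj; rewrite /= -[X in _ = X.-1]im.
Qed.

Lemma H_conj_last_pow i (lt_im : i < m) r :
  weq HR (nseq i.+1 (None, true) ++ (sm, false) :: nseq i.+1 (None, false) ++ r)
         ((Some (Ordinal lt_im), false) :: r).
Proof.
elim: i lt_im r => [|i IH] lt_im r.
  by rewrite /= H_conj nextIdx_last (_ : Ordinal hm = Ordinal lt_im) //; apply: val_inj.
rewrite [nseq i.+2 (None, false)]nseqSr -catA /=.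
have := IH (ltnW lt_im) ((None, false) :: r); rewrite /= => ->.
by rewrite H_conj (nextIdx_small (i := Ordinal (ltnW lt_im)) lt_im).
Qed.

End HRelations.

Section Isomorphism.
Variables (m n : nat) (hm : 0 < m).
Local Notation GR := (Grel m n).
Local Notation HR := (Hrel n hm).
Local Notation sm := (Some (lastIdx hm)).
Local Notation nx := (nextIdx hm).

Definition phi_letter (x : Ggen * bool) : Hgen m * bool :=
  match x with (gs, b) => (sm, b) | (gt, b) => (None, b) end.
Definition phi (w : word Ggen) : word (Hgen m) := map phi_letter w.

Definition psi_letter (x : Hgen m * bool) : word Ggen :=
  match x with (Some i, b) => sconj i.+1 b | (None, b) => [:: (gt, b)] end.
Definition psi (w : word (Hgen m)) : word Ggen := flatten (map psi_letter w).

Lemma phi_cat u v : phi (u ++ v) = phi u ++ phi v.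
Proof. exact: map_cat. Qed.

Lemma psi_cat u v : psi (u ++ v) = psi u ++ psi v.
Proof. by rewrite /psi map_cat flatten_cat. Qed.

Lemma phi_relator r v : GR r -> weq HR (phi r ++ v) v.
Proof.
case=> [->|[->|->]].
- by apply: weq_relator; apply: Hrel_ss.
- by rewrite /phi map_nseq; apply: weq_relator; apply: Hrel_tm.
- have phi_sst k : phi (flatten (nseq k sst)) =
      flatten (nseq k [:: (sm, false); (None, true); (sm, false); (None, false)]).
    by elim: k => //= k <-.
  rewrite phi_sst (weq_flatten_nseq (Y := [:: (sm, false); (Some (nx (lastIdx hm)), false)])).
    by apply: weq_relator; apply: Hrel_pow.
  by move=> w /=; rewrite H_conj.
Qed.

Lemma phi_weq u v : weq GR u v -> weq HR (phi u) (phi v).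
Proof.
elim=> {u v} [w|u v _ IH|u v w _ IH1 _ IH2|u x v|u r v Rr].
- by [].
- by symmetry.
- by rewrite IH1.
- by rewrite !phi_cat; apply: weq_catl; case: x => [[] b]; apply: weq_cancel_head.
- by rewrite !phi_cat; apply: weq_catl; apply: phi_relator.
Qed.

Lemma psi_nseq_t k : psi (nseq k (None, false)) = nseq k tG.
Proof. by elim: k => //= k; rewrite /psi /= => ->. Qed.

Lemma psi_flatten_nseq k X : psi (flatten (nseq k X)) = flatten (nseq k (psi X)).
Proof. by elim: k => //= k <-; rewrite psi_cat. Qed.

Lemma sconj_pair_succ k w :
  weq GR (sconj k false ++ sconj k.+1 false ++ w) (nseq k tGi ++ sst ++ nseq k tG ++ w).
Proof. by rewrite /sconj [nseq k.+1 tGi]nseqSr -!catA /= G_tk_cancel. Qed.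

Lemma sconj_conj_succ k v : weq GR (tGi :: sconj k false ++ tG :: sconj k.+1 false ++ v) v.
Proof.
have -> : tGi :: sconj k false ++ tG :: sconj k.+1 false ++ v =
          sconj k.+1 false ++ sconj k.+1 false ++ v.
  by rewrite /sconj /= -!catA /= cat_nseq_cons.
exact: sconj_cancel.
Qed.

Lemma sconj_conj_wrap v : weq GR (tGi :: sconj m false ++ tG :: sconj 1 false ++ v) v.
Proof.
rewrite /sconj /= -!catA /= (weq_cancel_head _ tG) G_tm G_ss G_tim.
exact: (weq_cancel_head' _ tG).
Qed.

Lemma psi_relator r v : HR r -> weq GR (psi r ++ v) v.
Proof.
case=> [->|[i [->|[->|->]]]].
- by rewrite psi_nseq_t G_tm.
- change (psi _) with (sconj i.+1 false ++ sconj i.+1 false ++ [::]).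
  by rewrite cats0 -catA sconj_cancel.
- rewrite psi_flatten_nseq.
  change (psi _) with (sconj i.+1 false ++ sconj (nx i).+1 false ++ [::]); rewrite cats0.
  case: (idx_small_or_last hm i) => [lt_im|->].
  + rewrite (nextIdx_small hm lt_im).
    rewrite (weq_flatten_nseq_conj (Y := sst) (P := nseq i.+1 tGi) (Q := nseq i.+1 tG)).
    * by rewrite (weq_relator _ (Grel_sst m n)) G_tik_cancel.
    * by move=> w; rewrite -catA; apply: sconj_pair_succ.
    * exact: G_tik_cancel.
    * exact: G_tk_cancel.
  + rewrite lastIdxS nextIdx_last (weq_flatten_nseq (Y := sst)).
      exact: weq_relator _ (Grel_sst m n).
    by move=> w; rewrite /sconj /sst -!catA /= G_tm G_tim.
- change (psi _) with (tGi :: sconj i.+1 false ++ tG :: sconj (nx i).+1 false ++ [::]).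
  rewrite cats0 cat_cons -catA cat_cons.
  case: (idx_small_or_last hm i) => [lt_im|->].
  + by rewrite (nextIdx_small hm lt_im); apply: sconj_conj_succ.
  + by rewrite lastIdxS nextIdx_last; apply: sconj_conj_wrap.
Qed.

Lemma psi_letter_cancel x r : weq GR (psi_letter x ++ psi_letter (inv_letter x) ++ r) r.
Proof.
case: x => [[i|] b]; first exact: sconj_cancel.
exact: (weq_cancel_head _ (gt, b)).
Qed.

Lemma psi_weq u v : weq HR u v -> weq GR (psi u) (psi v).
Proof.
elim=> {u v} [w|u v _ IH|u v w _ IH1 _ IH2|u x v|u r v Rr].
- by [].
- by symmetry.
- by rewrite IH1.
- by rewrite !psi_cat; apply: weq_catl; apply: psi_letter_cancel.
- by rewrite !psi_cat; apply: weq_catl; apply: psi_relator.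
Qed.

Lemma psi_phi u : weq GR (psi (phi u)) u.
Proof.
elim: u => [|[[] b] u IH] //.
- change (weq GR (sconj (lastIdx hm).+1 b ++ psi (phi u)) ((gs, b) :: u)).
  by rewrite IH /sconj lastIdxS -catA /= G_tm G_tim.
- by change (weq GR ((gt, b) :: psi (phi u)) ((gt, b) :: u)); rewrite IH.
Qed.

Lemma phi_sconj k b :
  phi (sconj k b) = nseq k (None, true) ++ (sm, b) :: nseq k (None, false).
Proof. by rewrite /sconj phi_cat /phi /= !map_nseq. Qed.

Lemma phi_psi w : weq HR (phi (psi w)) w.
Proof.
elim: w => [|[[i|] b] w IH] //.
- change (weq HR (phi (sconj i.+1 b ++ psi w)) ((Some i, b) :: w)).
  rewrite phi_cat IH phi_sconj -catA cat_cons H_s_inv (H_s_inv n hm i b).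
  by case: i => i lt_im; apply: H_conj_last_pow.
- by change (weq HR ((None, b) :: phi (psi w)) ((None, b) :: w)); rewrite IH.
Qed.

Lemma phi_pres_iso : pres_iso GR HR phi.
Proof.
split.
- exact: phi_weq.
- by move=> u v; rewrite phi_cat.
- by move=> u v uv; rewrite -(psi_phi u) -(psi_phi v); apply: psi_weq.
- by move=> w; exists (psi w); apply: phi_psi.
Qed.

End Isomorphism.

(** * Finite cases *)

Lemma G1_finite n : pres_finite (Grel 1 n).
Proof.
pose nf (b : bool) : word Ggen := nseq b sG.
apply: (@pres_finite_of_nf _ _ _ nf false) => //.
apply: G_nf_cons => // [[]|b].
- by exists false; apply: (weq_relator [::] (Grel_ss 1 n)).
- by exists true.
- by exists b; apply: (weq_relator (nf b) (Grel_tm 1 n)).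
Qed.

Section CommutingCase.
Variables (m : nat) (hm : 0 < m).
Local Notation GR := (Grel m 1).

Lemma G_t_s_comm r : weq GR (tG :: sG :: r) (sG :: tG :: r).
Proof.
have sst1 : weq GR (sG :: tGi :: sG :: tG :: r) r := weq_relator r (Grel_sst m 1).
have tis_st : weq GR (tGi :: sG :: tG :: r) (sG :: r).
  by rewrite -{1}(G_ss m 1 false false (tGi :: sG :: tG :: r)) sst1.
by rewrite -tis_st (weq_cancel_head _ tG).
Qed.

Lemma G_n1_finite : pres_finite GR.
Proof.
pose nf (p : bool * 'I_m) : word Ggen := nseq p.1 sG ++ nseq p.2 tG.
apply: (@pres_finite_of_nf _ _ _ nf (false, Ordinal hm)) => //.
apply: G_nf_cons => // [[[] l] | [a l]].
- by exists (false, l); apply: G_ss.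
- by exists (true, l).
- have [l' Hl'] := weq_cons_nseq_mod (G_tm m 1) (ltn_ord l).
  exists (a, l'); rewrite /nf -Hl'.
  by case: a => //=; rewrite G_t_s_comm.
Qed.

End CommutingCase.

Definition letter (c : bool) : Ggen * bool := if c then sG else tG.

Fixpoint alternating (c : bool) (k : nat) : word Ggen :=
  if k is k'.+1 then letter c :: alternating (~~ c) k' else [::].

Lemma alternating_double c k :
  alternating c k.*2 = flatten (nseq k [:: letter c; letter (~~ c)]).
Proof. by elim: k => // k IH; rewrite doubleS /= negbK IH. Qed.

Lemma flatten_nseq_double (T : Type) (x : seq T) k :
  flatten (nseq k.*2 x) = flatten (nseq k (x ++ x)).
Proof. by elim: k => // k IH; rewrite doubleS /= IH catA. Qed.

Section DihedralCase.
Variables (n : nat) (hn : 0 < n).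
Local Notation GR := (Grel 2 n).

Lemma G2_letter_sq c r : weq GR (letter c :: letter c :: r) r.
Proof. by case: c; [apply: G_ss | exact: (weq_relator r (Grel_tm 2 n))]. Qed.

Lemma G2_ts_st_cancel k r :
  weq GR (flatten (nseq k [:: tG; sG]) ++ flatten (nseq k [:: sG; tG]) ++ r) r.
Proof.
elim: k r => [|k IH] r //.
rewrite nseqSr flatten_cat /= -!catA /=.
by rewrite (G2_letter_sq true) (G2_letter_sq false) IH.
Qed.

Lemma G2_st_pow r :
  weq GR (flatten (nseq n [:: sG; tG]) ++ flatten (nseq n [:: sG; tG]) ++ r) r.
Proof.
rewrite catA -flatten_cat -nseqD addnn flatten_nseq_double.
rewrite (weq_flatten_nseq (Y := sst)); first exact: weq_relator _ (Grel_sst 2 n).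
by move=> v /=; rewrite (@weq_inv_of_power _ _ gt 2 _ (Grel_tm 2 n)).
Qed.

Lemma G2_alternating_swap c r :
  weq GR (alternating c n.*2 ++ r) (alternating (~~ c) n.*2 ++ r).
Proof.
have ts_st : weq GR (alternating false n.*2 ++ r) (alternating true n.*2 ++ r).
  by rewrite !alternating_double /= -{1}(G2_st_pow r) G2_ts_st_cancel.
by case: c => /=; [symmetry|].
Qed.

Lemma G2_finite : pres_finite GR.
Proof.
pose nf (p : bool * 'I_n.*2.+1) : word Ggen := alternating p.1 p.2.
have lt_1_2n1 : 1 < n.*2.+1 by rewrite ltnS -addnn; case: n hn.
have nf_cons d i : exists j, weq GR (letter d :: nf i) (nf j).
  case: i => c [[|l] lt_l]; first by exists (d, Ordinal lt_1_2n1).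
  have [<- | ne_cd] := eqVneq c d.
    by exists (~~ c, Ordinal (ltnW lt_l)); apply: G2_letter_sq.
  have -> : c = ~~ d by case: c d ne_cd => [] [].
  case: (ltngtP l.+2 n.*2.+1) => [lt_l2 | | l2].
  - by exists (d, Ordinal lt_l2).
  - by rewrite ltnNge lt_l.
  - have swap := G2_alternating_swap (~~ d) [::].
    rewrite !cats0 (_ : n.*2 = l.+1) ?negbK in swap; last by case: l2.
    exists (~~ d, Ordinal (ltnW lt_l)).
    change (weq GR (letter d :: alternating (~~ d) l.+1) (alternating (~~ d) l)).
    by rewrite swap; apply: G2_letter_sq.
apply: (@pres_finite_of_nf _ _ _ nf (true, Ordinal (ltn0Sn _))) => //.
by apply: G_nf_cons => //; [apply: (nf_cons true) | apply: (nf_cons false)].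
Qed.

End DihedralCase.

Lemma H2_s_comm m (hm : 0 < m) i r :
  weq (Hrel 2 hm) ((Some (nextIdx hm i), false) :: (Some i, false) :: r)
                  ((Some i, false) :: (Some (nextIdx hm i), false) :: r).
Proof.
move: r; apply: (@weq_commute_involutions _ _ [:: (Some i, false)] [:: (Some (nextIdx hm i), false)]) => r'.
- exact: weq_relator r' (Hrel_ss 2 hm i).
- exact: weq_relator r' (Hrel_ss 2 hm _).
- exact: weq_relator r' (Hrel_pow 2 hm i).
Qed.

Section H32.
Variable hm : 0 < 3.
Local Notation HR := (Hrel 2 hm).
Local Notation sl i := (Some i, false).
Local Notation tl := (None, false).

Let s0 : 'I_3 := Ordinal (isT : 0 < 3).
Let s1 : 'I_3 := Ordinal (isT : 1 < 3).
Let s2 : 'I_3 := Ordinal (isT : 2 < 3).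

Let nextIdx0 : nextIdx hm s0 = s1. Proof. exact: val_inj. Qed.
Let nextIdx1 : nextIdx hm s1 = s2. Proof. exact: val_inj. Qed.
Let nextIdx2 : nextIdx hm s2 = s0. Proof. exact: val_inj. Qed.

Let s1_s0 r : weq HR (sl s1 :: sl s0 :: r) (sl s0 :: sl s1 :: r).
Proof. by rewrite -nextIdx0; apply: H2_s_comm. Qed.
Let s2_s1 r : weq HR (sl s2 :: sl s1 :: r) (sl s1 :: sl s2 :: r).
Proof. by rewrite -nextIdx1; apply: H2_s_comm. Qed.
Let s2_s0 r : weq HR (sl s2 :: sl s0 :: r) (sl s0 :: sl s2 :: r).
Proof. by rewrite -nextIdx2; symmetry; apply: H2_s_comm. Qed.
Let t_s0 r : weq HR (tl :: sl s0 :: r) (sl s2 :: tl :: r).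
Proof. by rewrite -nextIdx2; apply: H_t_s. Qed.
Let t_s1 r : weq HR (tl :: sl s1 :: r) (sl s0 :: tl :: r).
Proof. by rewrite -nextIdx0; apply: H_t_s. Qed.
Let t_s2 r : weq HR (tl :: sl s2 :: r) (sl s1 :: tl :: r).
Proof. by rewrite -nextIdx1; apply: H_t_s. Qed.

Let s_toggle i (e : bool) r : weq HR (sl i :: nseq e (sl i) ++ r) (nseq (~~ e) (sl i) ++ r).
Proof. by case: e => /=; [apply: weq_relator (Hrel_ss 2 hm i) |]. Qed.

Lemma H32_finite : pres_finite HR.
Proof.
pose nf (p : bool * bool * bool * 'I_3) : word (Hgen 3) :=
  let: (e0, e1, e2, l) := p in
  nseq e0 (sl s0) ++ nseq e1 (sl s1) ++ nseq e2 (sl s2) ++ nseq l tl.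
have nf_s i p : exists q, weq HR (sl i :: nf p) (nf q).
  case: p => [[[e0 e1] e2] l]; rewrite /nf.
  have [-> | [-> | ->]] : i = s0 \/ i = s1 \/ i = s2.
    case: i => [[|[|[|i]]] lt_i3] //; [left | right; left | right; right];
    exact: val_inj.
  - by exists (~~ e0, e1, e2, l); apply: s_toggle.
  - by exists (e0, ~~ e1, e2, l); rewrite (weq_move_past s1_s0) s_toggle.
  - exists (e0, e1, ~~ e2, l).
    by rewrite (weq_move_past s2_s0) (weq_move_past s2_s1) s_toggle.
have nf_t p : exists q, weq HR (tl :: nf p) (nf q).
  case: p => [[[e0 e1] e2] l]; rewrite /nf.
  have [l' Hl'] := weq_cons_nseq_mod (fun r => weq_relator r (Hrel_tm 2 hm)) (ltn_ord l).
  exists (e1, e2, e0, l'); rewrite -Hl'.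
  rewrite (weq_move_past t_s0) (weq_move_past t_s1) (weq_move_past t_s2).
  by case: e0 => //=; rewrite (weq_move_past s2_s0) (weq_move_past s2_s1).
apply: (@pres_finite_of_nf _ _ _ nf (false, false, false, s0)) => //.
move=> [[i|] []] p.
- by have [q Hq] := nf_s i p; exists q; rewrite H_s_inv.
- exact: nf_s.
- have [q Hq] := nf_cons_nseq nf_t 2 p; exists q.
  by rewrite (@weq_inv_of_power _ _ None 3 _ (Hrel_tm 2 hm)).
- exact: nf_t.
Qed.

End H32.

Lemma G32_finite : pres_finite (Grel 3 2).
Proof. exact: pres_finite_iso (phi_pres_iso 2 (isT : 0 < 3)) (H32_finite _). Qed.

(** * Infinite cases *)

Section TwistedAction.
Local Open Scope ring_scope.
Variables (a b : nat).
Local Notation M := a.+2.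
Local Notation N := b.+2.
Variables (k : 'I_M -> 'I_N) (g : 'I_M -> 'I_N -> int).

Definition point := ('I_M * 'I_N * int)%type.

Definition twist j x : int := g j x - g j (k j - x).

Definition act_s (y : point) : point := let: (j, x, z) := y in (j, k j - x, z + twist j x).
Definition act_t (y : point) : point := let: (j, x, z) := y in (j + 1, x, z).
Definition act_ti (y : point) : point := let: (j, x, z) := y in (j - 1, x, z).

Definition act_letter (l : Ggen * bool) : point -> point :=
  match l with (gs, _) => act_s | (gt, false) => act_t | (gt, true) => act_ti end.

Fixpoint act (w : word Ggen) (y : point) : point :=
  if w is l :: w' then act_letter l (act w' y) else y.

Lemma act_cons l w y : act (l :: w) y = act_letter l (act w y).
Proof. by []. Qed.

Lemma act_cat u v y : act (u ++ v) y = act u (act v y).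
Proof. by elim: u => //= l u ->. Qed.

Lemma act_sK : involutive act_s.
Proof.
case=> [[j x] z] /=; rewrite /twist.
have -> : k j - (k j - x) = x by ring.
congr (_, _, _); ring.
Qed.

Lemma act_letterK l y : act_letter l (act_letter (inv_letter l) y) = y.
Proof.
case: l => [[] []] /=; rewrite ?act_sK //.
all: by case: y => [[j x] z] /=; congr (_, _, _); ring.
Qed.

Definition shift j := k j - k (j + 1).
Definition drift j x := twist (j + 1) x + twist j (k (j + 1) - x).

Lemma act_sst j x z : act sst (j, x, z) = (j, x + shift j, z + drift j x).
Proof. by rewrite /= /shift /drift addrK; congr (_, _, _); ring. Qed.

Lemma act_sst_pow i j x z : act (flatten (nseq i sst)) (j, x, z) =
  (j, x + i%:R * shift j, z + \sum_(l < i) drift j (x + l%:R * shift j)).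
Proof.
elim: i => [|i IH]; first by rewrite /= big_ord0; congr (_, _, _); ring.
rewrite -[flatten _]/(sst ++ flatten (nseq i sst)) act_cat IH act_sst big_ord_recr /=.
by congr (_, _, _); rewrite ?mulrS; ring.
Qed.

(* The drift of (s t^-1 s t)^N along a [shift j]-orbit telescopes when g j = g (j + 1),
   and cancels in pairs when x |-> k (j + 1) - x maps the orbit to itself. *)
Definition balanced j :=
  g j = g (j + 1) \/ forall x : 'I_N, exists t : 'I_N, k (j + 1) - x = x + t * shift j.

Lemma sum_drift_balanced j x : balanced j -> \sum_(l < N) drift j (x + l%:R * shift j) = 0.
Proof.
move=> bal_j; under eq_bigr do rewrite natr_Zp.
set E := shift j; set k1 := k (j + 1); set g0 := g j; set g1 := g (j + 1).
have orbit_shift (h : 'I_N -> int) :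
    \sum_(l < N) h (x + l * E + E) = \sum_(l < N) h (x + l * E).
  rewrite [RHS](reindex_inj (addIr 1)) /=; apply: eq_bigr => l _; congr h; ring.
have driftE (l : 'I_N) : drift j (x + l * E) =
    (g1 (x + l * E) - g0 (x + l * E + E)) + (g0 (k1 - (x + l * E)) - g1 (k1 - (x + l * E))).
  rewrite /drift /twist -/k1 -/g0 -/g1.
  have -> : k j - (k1 - (x + l * E)) = x + l * E + E by rewrite /E /shift -/k1; ring.
  ring.
rewrite (eq_bigr _ (fun l _ => driftE l)) big_split /= !sumrB orbit_shift.
case: bal_j => [g01 | reflect_orbit]; first by rewrite /g1 -g01 -/g0; ring.
have orbit_reflect (h : 'I_N -> int) :
    \sum_(l < N) h (k1 - (x + l * E)) = \sum_(l < N) h (x + l * E).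
  have [t Ht] := reflect_orbit x.
  have inj : injective (fun l : 'I_N => t - l).
    by apply: (can_inj (g := fun l : 'I_N => t - l)) => l; ring.
  rewrite [RHS](reindex_inj inj) /=; apply: eq_bigr => l _; congr h.
  have -> : k1 - (x + l * E) = (k1 - x) - l * E by ring.
  by rewrite /k1 Ht -/E; ring.
by rewrite !orbit_reflect; ring.
Qed.

Lemma Zp_natr_self n : (n.+2%:R : 'I_n.+2) = 0.
Proof. by apply: val_inj; rewrite Zp_nat /= modnn. Qed.

Lemma act_tm i j x z : act (nseq i tG) (j, x, z) = (j + i%:R, x, z).
Proof.
elim: i => [|i IH]; first by rewrite /= addr0.
by rewrite /= IH /=; congr (_, _, _); rewrite mulrS; ring.
Qed.

Hypothesis all_balanced : forall j, balanced j.

Lemma act_relator r y : Grel M N r -> act r y = y.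
Proof.
case: y => [[j x] z] [->|[->|->]].
- exact: act_sK.
- by rewrite act_tm Zp_natr_self addr0.
- by rewrite act_sst_pow Zp_natr_self mul0r addr0 sum_drift_balanced ?addr0.
Qed.

Lemma act_weq u v : weq (Grel M N) u v -> act u =1 act v.
Proof.
elim=> {u v} [w|u v _ IH|u v w _ IH1 _ IH2|u l v|u r v Rr] y.
- by [].
- by rewrite IH.
- by rewrite IH1 IH2.
- by rewrite !act_cat !act_cons act_letterK.
- by rewrite !act_cat (act_relator _ Rr).
Qed.

Lemma not_pres_finite_of_act w :
  (forall z, act w (0, 0, z) = (0, 0, z + 1)) -> ~ pres_finite (Grel M N).
Proof.
move=> w_translates.
apply: (not_pres_finite_of_invariant (F := fun u => (act u (0, 0, 0)).2)).
  by move=> u v uv; rewrite (act_weq uv).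
move=> i; exists (flatten (nseq i w)).
suff -> : act (flatten (nseq i w)) (0, 0, 0) = (0, 0, i%:Z) by [].
elim: i => // i IH; rewrite /= act_cat IH w_translates.
by congr (_, _, _); rewrite -[in RHS]addn1 PoszD.
Qed.

End TwistedAction.

Lemma val_add1 p (j : 'I_p.+2) : val (j + 1)%R = (val j).+1 %% p.+2.
Proof. by rewrite /= modnDmr addn1. Qed.

Section AtLeastFour.
Local Open Scope ring_scope.
Variables (a b : nat).
Local Notation M := a.+4.
Local Notation N := b.+2.

Definition k_ge4 (j : 'I_M) : 'I_N := if (val j == 0)%N || (val j == 2)%N then 1 else 0.
Definition g_ge4 (j : 'I_M) : 'I_N -> int :=
  if (val j == 2)%N then fun x => Posz (x == 0) else fun _ => 0.

Lemma balanced_ge4 j : balanced k_ge4 g_ge4 j.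
Proof.
have vS := val_add1 j.
have [j1 | n1] := eqVneq (val j) 1%N.
  right => x; exists (x + x - 1).
  by rewrite /shift /k_ge4 vS j1 modn_small //=; ring.
have [j2 | n2] := eqVneq (val j) 2%N.
  right => x; exists (- (x + x)).
  by rewrite /shift /k_ge4 vS j2 modn_small //=; ring.
left; rewrite /g_ge4 (negbTE n2) vS.
case: (ltngtP j.+1 M) => [lt_j1M | | ->]; last by rewrite modnn.
- by rewrite modn_small // eqSS (negbTE n1).
- by rewrite ltnNge ltn_ord.
Qed.

Lemma G_ge4_infinite : ~ pres_finite (Grel M N).
Proof.
apply: (not_pres_finite_of_act balanced_ge4 (w := [:: sG; tGi; tGi; sG; tG; tG])) => z.
have v2 : val (0 + 1 + 1 : 'I_M) = 2%N by rewrite !val_add1.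
have [k2 g2] : k_ge4 (0 + 1 + 1) = 1 /\ g_ge4 (0 + 1 + 1) = fun x => Posz (x == 0).
  by rewrite /k_ge4 /g_ge4 v2.
have back : (0 + 1 + 1 - 1 - 1 : 'I_M) = 0 by ring.
have [k0 g0] : k_ge4 0 = 1 /\ g_ge4 0 = fun _ => 0 by [].
rewrite /= /twist k2 g2 back k0 g0 /=.
have -> : (1 - 0 : 'I_N) = 1 by ring.
have -> : (1 - 1 : 'I_N) = 0 by ring.
have -> : ((1 : 'I_N) == 0) = false by apply/negP => /eqP/(congr1 val); rewrite /= modn_small.
by congr (_, _, _); rewrite /=; ring.
Qed.

End AtLeastFour.

Section Three.
Local Open Scope ring_scope.
Variable b : nat.
Local Notation N := b.+3.

Definition k3 (j : 'I_3) : 'I_N := (val j)%:R.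
Definition g3 (j : 'I_3) : 'I_N -> int :=
  if (val j == 2)%N then fun x => Posz (x == 0) else fun _ => 0.

Let o0 : 'I_3 := Ordinal (isT : (0 < 3)%N).
Let o1 : 'I_3 := Ordinal (isT : (1 < 3)%N).
Let o2 : 'I_3 := Ordinal (isT : (2 < 3)%N).

Lemma balanced3 j : balanced k3 g3 j.
Proof.
right => x; rewrite /shift.
case: j => [[|[|[|//]]] lt_j3].
- have -> : Ordinal lt_j3 = o0 by apply: val_inj.
  have -> : o0 + 1 = o1 by apply: val_inj.
  by exists (x + x - 1); rewrite /k3 /=; ring.
- have -> : Ordinal lt_j3 = o1 by apply: val_inj.
  have -> : o1 + 1 = o2 by apply: val_inj.
  by exists (x + x - 2%:R); rewrite /k3 /=; ring.
- have -> : Ordinal lt_j3 = o2 by apply: val_inj.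
  have -> : o2 + 1 = o0 by apply: val_inj.
  by exists (- x); rewrite /k3 /=; ring.
Qed.

Let w3 := [:: sG; tGi; sG; tGi; sG; tG; tG].

Let to_o2 : (0 + 1 + 1 : 'I_3) = o2. Proof. exact: val_inj. Qed.
Let o2_to_o1 : (o2 - 1 : 'I_3) = o1. Proof. exact: val_inj. Qed.
Let o1_to_o0 : (o1 - 1 : 'I_3) = 0. Proof. exact: val_inj. Qed.

Lemma one_neq0 : ((1 : 'I_N) == 0) = false.
Proof. by apply/negP => /eqP/(congr1 val); rewrite /= modn_small. Qed.

Lemma two_neq0 : ((2%:R : 'I_N) == 0) = false.
Proof. by apply/negP => /eqP/(congr1 val); rewrite Zp_nat /= modn_small. Qed.

Lemma act_w3_0 z : act k3 g3 w3 (0, 0, z) = (0, 1, z + 1).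
Proof.
rewrite /= to_o2 o2_to_o1 o1_to_o0 /twist /k3 /g3 /= subr0 two_neq0.
by congr (_, _, _); rewrite /=; ring.
Qed.

Lemma act_w3_1 z : act k3 g3 w3 (0, 1, z) = (0, 0, z).
Proof.
rewrite /= to_o2 o2_to_o1 o1_to_o0 /twist /k3 /g3 /=.
have -> : (2%:R - 1 : 'I_N) = 1 by ring.
have -> : (1 - 1 : 'I_N) = 0 by ring.
by rewrite one_neq0 subrr; congr (_, _, _); rewrite /=; ring.
Qed.

Lemma G3_infinite : ~ pres_finite (Grel 3 N).
Proof.
apply: (not_pres_finite_of_act balanced3 (w := w3 ++ w3)) => z.
by rewrite act_cat act_w3_0 act_w3_1.
Qed.

End Three.

Theorem proposition4p11 (m n : nat) (hm : 0 < m) (hn : 0 < n) :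
  (exists phi : word Ggen -> word (Hgen m),
     [/\ pres_iso (Grel m n) (Hrel n hm) phi,
         weq (Hrel n hm) (phi [:: (gs, false)]) [:: (Some (lastIdx hm), false)]
       & weq (Hrel n hm) (phi [:: (gt, false)]) [:: (None, false)]]) /\
  (pres_finite (Grel m n) <->
     m = 1 \/ m = 2 \/ n = 1 \/ (m = 3 /\ n = 2)).
Proof.
split; first by exists (phi hm); split; first exact: phi_pres_iso.
split=> [G_fin | [->|[->|[->|[-> ->]]]]].
- case: m hm G_fin => [//|[|[|[|a]]]] _ G_fin; [by left | by right; left | |].
  + case: n hn G_fin => [//|[|[|b]]] _ G_fin; [by do 2 right; left | by do 3 right |].
    by case: (G3_infinite G_fin).
  + case: n hn G_fin => [//|[|b]] _ G_fin; first by do 2 right; left.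
    by case: (G_ge4_infinite G_fin).
- exact: G1_finite.
- exact: G2_finite.
- exact: G_n1_finite.
- exact: G32_finite.
Qed.
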